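(* In the one-counter game $\mathcal{G}$ defined below, $\mathrm{Verifier}$ has a strategy from the configuration $(s'_0,0)$ ensuring that every compatible play reaches the state $s'_F$ if and only if $\mathcal{T}$ accepts $w$.
   Context: Let $\mathcal{T}=(Q,q_0,\Sigma,\delta,q_F)$ be a deterministic Turing machine with tape alphabet $\Sigma=\{0,1,\#,a,r\}$ ($\#$ blank; $\mathcal{T}$ accepts immediately on reading $a$ and rejects immediately on reading $r$), transition function $\delta:Q\times\Sigma\to Q\times\Sigma\times\{\mathrm{Left},\mathrm{Right}\}$ with components $\delta_1,\delta_2,\delta_3$, and accepting state $q_F$. Let $w=w_1\dots w_{|w|}$ be an input, $n=|w|^k$, and assume $\mathcal{T}$ uses only cells $1,\dots,2^{2^n}$, with extra cells $0$ and $2^{2^n}+1$ initially holding $a$, the head initially on cell 1, and that if $\mathcal{T}$ halts accepting it does so in state $q_F$ with the head on cell 1 holding $a$. Let $\Delta=\Sigma\cup(Q\times\Sigma)$. The run of $\mathcal{T}$ on $w$ is the sequence of configurations $C^w_0C^w_1\dots$, each $C^w_i\in\Delta^{2^{2^n}+2}$ (indexed $0,\dots,2^{2^n}+1$) containing exactly one element of $Q\times\Sigma$ marking the state and head position; $C^w_0=a\,(q_0,w_1)\,w_2\dots w_{|w|}\,\#\dots\#\,a$; $C^w_i(j)$ is the $j$-th element. For $d\in\Delta$, $\mathrm{Pre}(d)$ is the set of triples: all $(d_1,d_2,d_3)\in\Sigma^3$ with $d_2=d$; all $((q,b),d_2,d_3)\in(Q\times\Sigma)\times\Sigma^2$ with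 either $d=(\delta_1(q,b),d_2)$ and $\delta_3(q,b)=\mathrm{Right}$, or $d=d_2$ and $\delta_3(q,b)\neq\mathrm{Right}$; all $(d_1,d_2,(q,b))\in\Sigma^2\times(Q\times\Sigma)$ with either $d=(\delta_1(q,b),d_2)$ and $\delta_3(q,b)=\mathrm{Left}$, or $d=d_2$ and $\delta_3(q,b)\neq\mathrm{Left}$; all $(d_1,(q,b),d_3)\in\Sigma\times(Q\times\Sigma)\times\Sigma$ with $d=\delta_2(q,b)$. The OCG $\mathcal{G}$ has players $\mathrm{Verifier},\mathrm{Falsifier}$, states $S'=(\{0,\dots,2^{2^n}+1\}\times(\Delta\cup\Delta^3))\cup\{s'_0,s'_z,s'_r,s'_F\}$, with $\mathrm{Verifier}$ controlling $(\{0,\dots,2^{2^n}+1\}\times\Delta)\cup\{s'_0\}$ and $\mathrm{Falsifier}$ the rest. Its transitions (state, weight, state) are exactly: $(s'_0,1,s'_0)$; $(s'_0,0,(1,(q_F,a)))$; $((j,d),0,(j,(d_1,d_2,d_3)))$ for $j\in\{1,\dots,2^{2^n}\}$, $(d_1,d_2,d_3)\in\mathrm{Pre}(d)$; for $j\in\{0,2^{2^n}+1\}$: $((j,a),0,s'_F)$ and $((j,d),0,s'_r)$ for $d\neq a$; $((j,d),0,s'_z)$ for all $(j,d)$ with $C^w_0(j)=d$; $(s'_z,0,s'_F)$; $(s'_z,-1,s'_r)$; and for $j\in\{1,\dots,2^{2^n}\}$ and $d_1,d_2,d_3\in\Delta$: $((j,(d_1,d_2,d_3)),-1,(j-1,d_1))$,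 $((j,(d_1,d_2,d_3)),-1,(j,d_2))$, $((j,(d_1,d_2,d_3)),-1,(j+1,d_3))$. Configurations are (state, counter value) pairs with counter in $\mathbb{N}$; a transition with weight $-1$ is disabled at counter value 0; plays are maximal sequences of configurations following enabled transitions (a play with no enabled move ends). *)

From mathcomp Require Import all_boot.
Set Implicit Arguments. Unset Strict Implicit. Unset Printing Implicit Defensive.

(* Tape alphabet Sigma = {0,1,#,a,r}. *)
Inductive Sig := Zero | One | Blank | SA | SR.
Inductive Dir := DLeft | DRight.

Inductive Delta (Q : Type) := DSym of Sig | DHead of Q & Sig.
Arguments DSym {Q}.

Section TM.
Variable Q : finType.
Variables (q0 qF : Q) (delta : Q -> Sig -> Q * Sig * Dir).

Definition delta1 q b := (delta q b).1.1.
Definition delta2 q b := (delta q b).1.2.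
Definition delta3 q b := (delta q b).2.

Definition ncells (w : seq Sig) (k : nat) : nat := 2 ^ (2 ^ (size w ^ k)).

(* C^w_0 = a (q0,w_1) w_2 ... w_|w| # ... # a, cells 0 .. N+1 *)
Definition init_conf (w : seq Sig) (N : nat) (j : nat) : Delta Q :=
  if j == 0 then DSym SA
  else if j == N.+1 then DSym SA
  else if j == 1 then DHead q0 (nth Blank w 0)
  else if j <= size w then DSym (nth Blank w j.-1)
  else DSym Blank.

Definition step (N : nat) (C : nat -> Delta Q) (j : nat) : Delta Q :=
  if (0 < j <= N) then
    match C j with
    | DHead q b => DSym (delta2 q b)
    | DSym s =>
        let from_right :=
          match C j.+1 with
          | DHead q b => if delta3 q b is DLeft then DHead (delta1 q b) s else DSym s
          | DSym _ => DSym s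
          end in
        match C j.-1 with
        | DHead q b => if delta3 q b is DRight then DHead (delta1 q b) s else from_right
        | DSym _ => from_right
        end
    end
  else C j.

Definition run (w : seq Sig) (N : nat) (i : nat) : nat -> Delta Q :=
  iter i (step N) (init_conf w N).

Definition accepts (w : seq Sig) (N : nat) : Prop :=
  exists i j b, run w N i j = DHead qF b.

Definition Pre (x1 x2 x3 d : Delta Q) : Prop :=
  match x1, x2, x3 with
  | DSym _, DSym s2, DSym _ => d = DSym s2
  | DHead q b, DSym s2, DSym _ =>
      (d = DHead (delta1 q b) s2 /\ delta3 q b = DRight) \/
      (d = DSym s2 /\ delta3 q b <> DRight)
  | DSym _, DSym s2, DHead q b =>
      (d = DHead (delta1 q b) s2 /\ delta3 q b = DLeft) \/
      (d = DSym s2 /\ delta3 q b <> DLeft)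
  | DSym _, DHead q b, DSym _ => d = DSym (delta2 q b)
  | _, _, _ => False
  end.

Inductive gstate :=
| GS0 | GSz | GSr | GSF
| GSingle of nat & Delta Q
| GTriple of nat & Delta Q & Delta Q & Delta Q.

Inductive weight := Wm1 | W0 | Wp1.

Inductive trans (N : nat) (C0 : nat -> Delta Q) : gstate -> weight -> gstate -> Prop :=
| t_loop : trans N C0 GS0 Wp1 GS0
| t_start : trans N C0 GS0 W0 (GSingle 1 (DHead qF SA))
| t_pre j d x1 x2 x3 : 1 <= j <= N -> Pre x1 x2 x3 d ->
    trans N C0 (GSingle j d) W0 (GTriple j x1 x2 x3)
| t_bndF j : (j = 0 \/ j = N.+1) -> trans N C0 (GSingle j (DSym SA)) W0 GSF
| t_bndR j d : (j = 0 \/ j = N.+1) -> d <> DSym SA -> trans N C0 (GSingle j d) W0 GSr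
| t_init j d : j <= N.+1 -> C0 j = d -> trans N C0 (GSingle j d) W0 GSz
| t_zF : trans N C0 GSz W0 GSF
| t_zR : trans N C0 GSz Wm1 GSr
| t_left j x1 x2 x3 : 1 <= j <= N ->
    trans N C0 (GTriple j x1 x2 x3) Wm1 (GSingle j.-1 x1)
| t_mid j x1 x2 x3 : 1 <= j <= N ->
    trans N C0 (GTriple j x1 x2 x3) Wm1 (GSingle j x2)
| t_right j x1 x2 x3 : 1 <= j <= N ->
    trans N C0 (GTriple j x1 x2 x3) Wm1 (GSingle j.+1 x3).

Definition verifier_owned (s : gstate) : bool :=
  match s with GS0 | GSingle _ _ => true | _ => false end.

Definition cfg := (gstate * nat)%type.

Definition upd (wt : weight) (c : nat) : option nat :=
  match wt with
  | Wm1 => if c is c'.+1 then Some c' else None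
  | W0 => Some c
  | Wp1 => Some c.+1
  end.

Definition move N C0 (c c' : cfg) : Prop :=
  exists wt, trans N C0 c.1 wt c'.1 /\ upd wt c.2 = Some c'.2.

Definition stuck N C0 (c : cfg) : Prop := forall c', ~ move N C0 c c'.

(* a Verifier strategy maps a history (previous configurations) and the
   current configuration to the next configuration *)
Definition strategy := seq cfg -> cfg -> cfg.

Definition legal N C0 (sigma : strategy) : Prop :=
  forall h c, verifier_owned c.1 -> ~ stuck N C0 c -> move N C0 c (sigma h c).

(* a play is pi : nat -> cfg, finite of last index n (len = Some n) or infinite *)
Definition compatible N C0 (sigma : strategy) (start : cfg)
    (pi : nat -> cfg) (len : option nat) : Prop :=
  pi 0 = start /\
  (forall i, (if len is Some n then is_true (i < n) else True) ->
     move N C0 (pi i) (pi i.+1) /\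
     (verifier_owned (pi i).1 -> pi i.+1 = sigma [seq pi k | k <- iota 0 i] (pi i))) /\
  (if len is Some n then stuck N C0 (pi n) else True).

Definition reaches (pi : nat -> cfg) (len : option nat) (s : gstate) : Prop :=
  exists i, (if len is Some n then is_true (i <= n) else True) /\ (pi i).1 = s.

Definition verifier_wins_reach N C0 (start : cfg) (target : gstate) : Prop :=
  exists sigma : strategy, legal N C0 sigma /\
    forall pi len, compatible N C0 sigma start pi len -> reaches pi len target.

End TM.

From mathcomp Require Import all_boot zify.
From Stdlib Require Import Classical ClassicalEpsilon Wf_nat.

Set Implicit Arguments. Unset Strict Implicit. Unset Printing Implicit Defensive.

(* A Verifier position (j, d) with counter value m claims that cell j of the
   m-th configuration of the run holds d.  Verifier backs the claim by a triple
   in Pre(d), i.e. by the three cells of configuration m-1 that determine cell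
   j (as long as configurations have a single head, Pre(d) is exactly the
   local step rule), and Falsifier challenges one of them, decrementing the
   counter.  The descent ends in s'_F only at a boundary cell holding a, or at
   s'_z with counter 0, i.e. with a claim about the initial configuration.

   If T accepts at time i, Verifier pumps the counter to i and then only makes
   true claims: every play is finite, since a rank built from the counter
   decreases, and can only stop in s'_F.  If T never accepts, the opening claim
   (1, (q_F, a)) is false whatever the counter, and Falsifier keeps a false
   claim alive by always challenging a wrong cell of the triple; a false claim
   never reaches s'_F. *)

Section ReachabilityGames.
Variables (Q : finType) (qF : Q) (delta : Q -> Sig -> Q * Sig * Dir).
Variables (N : nat) (C0 : nat -> Delta Q).

Local Notation mv := (move qF delta N C0).
Local Notation stk := (stuck qF delta N C0).

Definition positional (g : cfg Q -> cfg Q) : strategy Q := fun _ c =>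
  if excluded_middle_informative (mv c (g c)) then g c
  else if excluded_middle_informative (exists c', mv c c') is left ex
       then proj1_sig (constructive_indefinite_description _ ex) else c.

Lemma positional_legal g : legal qF delta N C0 (positional g).
Proof.
move=> h c _ live; rewrite /positional.
destruct (excluded_middle_informative (mv c (g c))) as [mv_g|no_g]; first done.
destruct (excluded_middle_informative (exists c', mv c c')) as [ex|nex].
- exact: proj2_sig (constructive_indefinite_description _ ex).
- by case: live => c' mv_c'; apply: nex; exists c'.
Qed.

Lemma positionalE g h c : mv c (g c) -> positional g h c = g c.
Proof. by rewrite /positional; destruct (excluded_middle_informative (mv c (g c))). Qed.

Definition in_play (len : option nat) (i : nat) : Prop :=
  if len is Some n then is_true (i <= n) else True.

Lemma verifier_wins_of_ranking (P : cfg Q -> Prop) (rank : cfg Q -> nat)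
    (g : cfg Q -> cfg Q) (start : cfg Q) (target : gstate Q) :
  P start ->
  (forall c, P c -> verifier_owned c.1 -> [/\ mv c (g c), P (g c) & rank (g c) < rank c]) ->
  (forall c c', P c -> ~~ verifier_owned c.1 -> mv c c' -> P c' /\ rank c' < rank c) ->
  (forall c, P c -> stk c -> c.1 = target) ->
  verifier_wins_reach qF delta N C0 start target.
Proof.
move=> P_start P_verifier P_falsifier P_stuck.
exists (positional g); split; first exact: positional_legal.
move=> pi len [pi0 [pi_move pi_end]].
have inv i : in_play len i ->
    P (pi i) /\ rank (pi i) + i <= rank start.
  elim: i => [|i IH] i_in; first by rewrite pi0 addn0.
  have [Pi rank_i] : P (pi i) /\ rank (pi i) + i <= rank start.
    by apply: IH; case: (len) i_in => //= n /ltnW.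
  have [mv_i sigma_i] := pi_move i ltac:(by case: (len) i_in).
  case owned: (verifier_owned (pi i).1).
  - have [mv_g P_g rank_g] := P_verifier _ Pi owned.
    by rewrite sigma_i // positionalE //; split=> //; lia.
  - by have [P' rank'] := P_falsifier _ _ Pi (negbT owned) mv_i; split=> //; lia.
case: len pi_move pi_end inv => [n|] _ pi_end inv.
- by exists n; split=> //; apply: P_stuck pi_end; case: (inv n (leqnn n)).
- by have [_] := inv (rank start).+1 I; lia.
Qed.

Section CounterPlay.
Variables (P : cfg Q -> Prop) (f : cfg Q -> cfg Q) (sigma : strategy Q) (start : cfg Q).
Hypotheses (P_start : P start) (sigma_legal : legal qF delta N C0 sigma).
Hypothesis P_verifier : forall c c', P c -> verifier_owned c.1 -> mv c c' -> P c'.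
Hypothesis P_falsifier :
  forall c, P c -> ~~ verifier_owned c.1 -> ~ stk c -> mv c (f c) /\ P (f c).

Fixpoint play_against (n : nat) : seq (cfg Q) * cfg Q :=
  if n is n'.+1 then
    let: (h, c) := play_against n' in
    (rcons h c, if verifier_owned c.1 then sigma h c else f c)
  else ([::], start).

Definition play_cfg n := (play_against n).2.

Lemma play_cfgS n : play_cfg n.+1 =
  if verifier_owned (play_cfg n).1
  then sigma [seq play_cfg k | k <- iota 0 n] (play_cfg n)
  else f (play_cfg n).
Proof.
have hist m : (play_against m).1 = [seq play_cfg k | k <- iota 0 m].
  elim: m => // m IH; rewrite -[in RHS]addn1 iotaD map_cat -IH /play_cfg /=.
  by case: (play_against m) => h c; rewrite cats1.
by rewrite -hist /play_cfg /=; case: (play_against n).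
Qed.

Lemma play_cfg_trap n : (forall k, k < n -> ~ stk (play_cfg k)) -> P (play_cfg n).
Proof.
elim: n => // n IH live; have Pn := IH (fun k lt => live k (ltnW lt)).
rewrite play_cfgS; case owned: (verifier_owned _).
- exact: P_verifier Pn owned (sigma_legal _ owned (live n (ltnSn n))).
- by case: (P_falsifier Pn (negbT owned) (live n (ltnSn n))).
Qed.

Lemma play_cfg_move n : (forall k, k <= n -> ~ stk (play_cfg k)) ->
  mv (play_cfg n) (play_cfg n.+1) /\ (verifier_owned (play_cfg n).1 ->
    play_cfg n.+1 = sigma [seq play_cfg k | k <- iota 0 n] (play_cfg n)).
Proof.
move=> live; have live_n := live n (leqnn n).
have Pn : P (play_cfg n) by apply: play_cfg_trap => k /ltnW; apply: live.
rewrite play_cfgS; case owned: (verifier_owned _); split=> //.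
- exact: sigma_legal.
- by case: (P_falsifier Pn (negbT owned) live_n).
Qed.

Lemma play_against_trapped : exists len,
  compatible qF delta N C0 sigma start play_cfg len /\
  forall i, in_play len i -> P (play_cfg i).
Proof.
case: (classic (exists n, stk (play_cfg n))) => [some_stuck|never_stuck].
- have [n [[stuck_n n_min] _]] := dec_inh_nat_subset_has_unique_least_element
    _ (fun n => classic _) some_stuck.
  have live k : k < n -> ~ stk (play_cfg k) by move=> lt /n_min; lia.
  exists (Some n); split.
    by split=> //; split=> // i lt_in; apply: play_cfg_move => k le; apply: live; lia.
  by move=> i; rewrite /in_play => le_in; apply: play_cfg_trap => k lt; apply: live; lia.
- have live k : ~ stk (play_cfg k) by move=> stuck_k; apply: never_stuck; exists k.
  exists None; split; last by move=> i _; apply: play_cfg_trap.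
  by split=> //; split=> // i _; apply: play_cfg_move.
Qed.

End CounterPlay.

Lemma verifier_loses_of_trap (P : cfg Q -> Prop) (f : cfg Q -> cfg Q)
    (start : cfg Q) (target : gstate Q) :
  P start -> (forall c, P c -> c.1 <> target) ->
  (forall c c', P c -> verifier_owned c.1 -> mv c c' -> P c') ->
  (forall c, P c -> ~~ verifier_owned c.1 -> ~ stk c -> mv c (f c) /\ P (f c)) ->
  ~ verifier_wins_reach qF delta N C0 start target.
Proof.
move=> P_start P_target P_verifier P_falsifier [sigma [sigma_legal sigma_wins]].
have [len [compat trapped]] :=
  play_against_trapped P_start sigma_legal P_verifier P_falsifier.
have [i [i_in reach_i]] := sigma_wins _ _ compat.
exact: P_target (trapped i i_in) reach_i.
Qed.

End ReachabilityGames.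

Section Run.
Variables (Q : finType) (q0 : Q) (delta : Q -> Sig -> Q * Sig * Dir) (w : seq Sig) (N : nat).
Hypothesis N_gt0 : 0 < N.

Local Notation C m := (run q0 delta w N m).

Definition is_head (x : Delta Q) : bool := if x is DHead _ _ then true else false.

Definition local_step (x1 x2 x3 : Delta Q) : Delta Q :=
  match x2 with
  | DHead q b => DSym (delta2 delta q b)
  | DSym s =>
      let from_right :=
        match x3 with
        | DHead q b => if delta3 delta q b is DLeft then DHead (delta1 delta q b) s else DSym s
        | DSym _ => DSym s
        end in
      match x1 with
      | DHead q b => if delta3 delta q b is DRight then DHead (delta1 delta q b) s else from_right
      | DSym _ => from_right
      end
  end.

Lemma step_local D j : 0 < j <= N -> step delta N D j = local_step (D j.-1) (D j) (D j.+1).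
Proof. by rewrite /step => ->. Qed.

Lemma Pre_local_step x1 x2 x3 d : is_head x1 + is_head x2 + is_head x3 <= 1 ->
  Pre delta x1 x2 x3 d <-> d = local_step x1 x2 x3.
Proof.
case: x1 => [s1|q1 b1]; case: x2 => [s2|q2 b2]; case: x3 => [s3|q3 b3] //= _;
  try case: (delta3 delta _ _); split; intuition congruence.
Qed.

Definition one_head_inside (D : nat -> Delta Q) :=
  (forall j, is_head (D j) -> 0 < j <= N) /\
  (forall i j, is_head (D i) -> is_head (D j) -> i = j).

Lemma one_head_inside_init : one_head_inside (init_conf q0 w N).
Proof.
have head1 j : is_head (init_conf q0 w N j) -> j = 1.
  by rewrite /init_conf; do 3 case: eqP => // _; case: ifP.
by split=> [j /head1 -> | i j /head1 -> /head1 ->].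
Qed.

Lemma head_step_origin D j : one_head_inside D -> is_head (step delta N D j) ->
  0 < j <= N /\
  ((exists q b, D j.-1 = DHead q b /\ delta3 delta q b = DRight) \/
   (exists q b, D j.+1 = DHead q b /\ delta3 delta q b = DLeft)).
Proof.
move=> [inside _]; rewrite /step; case: ifP => [j_in|j_out] head;
  last by move: j_out; rewrite inside.
split=> //; move: head; case: (D j.-1) => [s1|q1 b1]; case: (D j) => [s2|q2 b2];
  case: (D j.+1) => [s3|q3 b3] //=; try case dir1: (delta3 delta q1 b1);
  try case dir3: (delta3 delta q3 b3); move=> //= _; eauto 6.
Qed.

Lemma one_head_inside_step D : one_head_inside D -> one_head_inside (step delta N D).
Proof.
move=> ohD; have [_ unique] := ohD.
have origin i : is_head (step delta N D i) -> exists p q b,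
    D p = DHead q b /\ i = if delta3 delta q b is DRight then p.+1 else p.-1.
  move=> /(head_step_origin ohD) [/andP [i_gt0 _] [[q [b [Ep dir]]]|[q [b [Ep dir]]]]].
  - by exists i.-1, q, b; rewrite dir prednK.
  - by exists i.+1, q, b; rewrite dir.
split=> [i /(head_step_origin ohD) [] // | i j /origin [p [q [b [Ep ->]]]]].
move=> /origin [p' [q' [b' [Ep' ->]]]].
have same_p : p = p' by apply: unique; rewrite ?Ep ?Ep'.
by move: Ep'; rewrite -same_p Ep => -[-> ->].
Qed.

Lemma run_one_head_inside m : one_head_inside (C m).
Proof.
elim: m => [|m IH]; first exact: one_head_inside_init.
exact: one_head_inside_step.
Qed.

Lemma run_boundary m j : j = 0 \/ j = N.+1 -> C m j = DSym SA.
Proof.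
move=> j_out; elim: m => [|m IH].
- by case: j_out => ->; rewrite /run /init_conf //= eqxx.
- by rewrite /= /step; case: j_out IH => -> //; rewrite ltnn andbF.
Qed.

Lemma Pre_run m j d : 0 < j <= N ->
  Pre delta (C m j.-1) (C m j) (C m j.+1) d <-> d = C m.+1 j.
Proof.
move=> j_in; rewrite [C m.+1]/= step_local //; apply: Pre_local_step.
have [_ unique] := run_one_head_inside m.
case h1: (is_head (C m j.-1)); case h2: (is_head (C m j));
  case h3: (is_head (C m j.+1)) => //;
  first [have := unique _ _ h1 h2 | have := unique _ _ h2 h3 | have := unique _ _ h1 h3]; lia.
Qed.

End Run.

Section Reduction.
Variables (Q : finType) (q0 qF : Q) (delta : Q -> Sig -> Q * Sig * Dir).
Variables (w : seq Sig) (N : nat).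
Hypothesis N_gt0 : 0 < N.

Local Notation C m := (run q0 delta w N m).
Local Notation mv := (move qF delta N (init_conf q0 w N)).
Local Notation stk := (stuck qF delta N (init_conf q0 w N)).

Section Accepting.
Variable i0 : nat.
Hypothesis accept_i0 : C i0 1 = DHead qF SA.

Definition honest_move (c : cfg Q) : cfg Q :=
  let: (s, m) := c in
  match s with
  | GS0 => if m < i0 then (GS0 Q, m.+1) else (GSingle 1 (DHead qF SA), m)
  | GSingle j _ =>
      if m is m'.+1 then
        if (j == 0) || (j == N.+1) then (GSF Q, m)
        else (GTriple j (C m' j.-1) (C m' j) (C m' j.+1), m)
      else (GSz Q, 0)
  | _ => c
  end.

Definition honest (c : cfg Q) : Prop :=
  let: (s, m) := c in
  match s with
  | GS0 => m <= i0
  | GSingle j d => j <= N.+1 /\ d = C m j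
  | GTriple j x1 x2 x3 => 0 < j <= N /\
      if m is m'.+1 then [/\ x1 = C m' j.-1, x2 = C m' j & x3 = C m' j.+1] else False
  | GSz => m = 0
  | GSF => True
  | GSr => False
  end.

Definition honest_rank (c : cfg Q) : nat :=
  let: (s, m) := c in
  match s with
  | GS0 => 2 * i0 + 3 + (i0 - m)
  | GSingle _ _ => 2 * m + 2
  | GTriple _ _ _ _ => 2 * m + 1
  | GSz => 1
  | _ => 0
  end.

Lemma honest_verifier_move c : honest c -> verifier_owned c.1 ->
  [/\ mv c (honest_move c), honest (honest_move c) & honest_rank (honest_move c) < honest_rank c].
Proof.
case: c => [[||||j d|//] m] //= hc _.
- case: ltnP => m_i0.
  + by split=> //=; [exists Wp1; split=> //; constructor | lia].
  + have -> : m = i0 by lia.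
    split; [by exists W0; split=> //; constructor | by rewrite /= accept_i0 | rewrite /=; lia].
- case: hc => j_le ->; case: m => [|m]; first by split=> //; exists W0; split=> //; constructor.
  case: ifP => [/orP j_out|j_in].
  + have {}j_out : j = 0 \/ j = N.+1 by case: j_out => /eqP; auto.
    by split=> //; exists W0; split=> //; rewrite run_boundary //; constructor.
  + have {}j_in : 0 < j <= N by move: j_in j_le; case: j => [|j] //=; rewrite eqSS; lia.
    split; [| by split | rewrite /=; lia].
    by exists W0; split=> //; constructor=> //; apply/Pre_run.
Qed.

Lemma honest_falsifier_move c c' : honest c -> ~~ verifier_owned c.1 -> mv c c' ->
  honest c' /\ honest_rank c' < honest_rank c.
Proof.
case: c c' => [s m] [s' m'] /= hc owned [wt [/= t /= upd_m]].
case: t hc owned upd_m => //=; try by move=> ->.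
all: move=> j x1 x2 x3 _ [j_in]; case: m => // m [E1 E2 E3] _ [<-]; subst.
all: by split; [split=> //; lia | lia].
Qed.

Lemma honest_stuck c : honest c -> stk c -> c.1 = GSF Q.
Proof.
move=> hc stuck_c; case owned: (verifier_owned c.1).
  by have [mv_c _ _] := honest_verifier_move hc owned; case: (stuck_c _ mv_c).
case: c hc stuck_c owned => [[| | | |j d|j x1 x2 x3] m] //= hc stuck_c _.
- by subst m; case: (stuck_c (GSF Q, 0)); exists W0; split=> //; constructor.
- case: hc => j_in; case: m stuck_c => // m stuck_c _.
  by case: (stuck_c (GSingle j x2, m)); exists Wm1; split=> //; constructor.
Qed.

Lemma accepting_verifier_wins :
  verifier_wins_reach qF delta N (init_conf q0 w N) (GS0 Q, 0) (GSF Q).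
Proof.
apply: (verifier_wins_of_ranking (P := honest) (rank := honest_rank) (g := honest_move)).
- by [].
- exact: honest_verifier_move.
- exact: honest_falsifier_move.
- exact: honest_stuck.
Qed.
End Accepting.

Definition Delta_eq_dec (x y : Delta Q) : {x = y} + {x <> y}.
Proof. decide equality; try decide equality; apply: eq_comparable. Defined.

Section Rejecting.
Hypothesis never_accepts : forall m, C m 1 <> DHead qF SA.

Definition false_claim (c : cfg Q) : Prop :=
  let: (s, m) := c in
  match s with
  | GS0 => True
  | GSingle j d => j <= N.+1 /\ d <> C m j
  | GTriple j x1 x2 x3 => 0 < j <= N /\
      if m is m'.+1 then ~ [/\ x1 = C m' j.-1, x2 = C m' j & x3 = C m' j.+1] else True
  | GSz => 0 < m
  | GSF => False
  | GSr => True
  end.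

Lemma false_claim_verifier_move c c' :
  false_claim c -> verifier_owned c.1 -> mv c c' -> false_claim c'.
Proof.
case: c c' => [s m] [s' m'] /= fc owned [wt [/= t /= upd_m]].
case: t fc owned upd_m => //= [_ _ [<-] | j d x1 x2 x3 j_in pre [_ wrong] _ [<-] |
  j j_out [_ wrong] _ _ | j d _ <- [_ wrong] _ [<-]].
- by split=> // accept; apply: never_accepts m (esym accept).
- split=> //; case: m wrong => // m wrong [E1 E2 E3]; apply: wrong.
  by rewrite -(Pre_run _ _ _ N_gt0 _ _ j_in) -E1 -E2 -E3.
- by apply: wrong; rewrite run_boundary.
- by case: m wrong.
Qed.

Definition challenge (c : cfg Q) : cfg Q :=
  match c with
  | (GTriple j x1 x2 x3, m'.+1) =>
      if Delta_eq_dec x1 (C m' j.-1) then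
        if Delta_eq_dec x2 (C m' j) then (GSingle j.+1 x3, m') else (GSingle j x2, m')
      else (GSingle j.-1 x1, m')
  | (GSz, m'.+1) => (GSr Q, m')
  | _ => c
  end.

Lemma false_claim_challenge c : false_claim c -> ~~ verifier_owned c.1 -> ~ stk c ->
  mv c (challenge c) /\ false_claim (challenge c).
Proof.
case: c => [[| | | |//|j x1 x2 x3] m] //= fc _ live.
- by case: m fc live => // m _ _; split=> //; exists Wm1; split=> //; constructor.
- by exfalso; apply: live => c' [wt [/= t _]]; inversion t.
- case: fc => j_in; case: m live => [|m] live wrong.
    by exfalso; apply: live => c' [wt [/= t upd_m]]; inversion t; subst.
  case: Delta_eq_dec => [E1|wrong1]; first case: Delta_eq_dec => [E2|wrong2].
  + by split; [exists Wm1; split=> //; constructor | split; [lia | move=> E3; apply: wrong]].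
  + by split; [exists Wm1; split=> //; constructor | split; [lia | by []]].
  + by split; [exists Wm1; split=> //; constructor | split; [lia | by []]].
Qed.

Lemma rejecting_verifier_loses :
  ~ verifier_wins_reach qF delta N (init_conf q0 w N) (GS0 Q, 0) (GSF Q).
Proof.
apply: (verifier_loses_of_trap (P := false_claim) (f := challenge)).
- by [].
- by case=> [[]].
- exact: false_claim_verifier_move.
- exact: false_claim_challenge.
Qed.

End Rejecting.

End Reduction.

Theorem mainTheorem7 (Q : finType) (q0 qF : Q) (delta : Q -> Sig -> Q * Sig * Dir)
  (w : seq Sig) (k : nat) :
  (forall i, i < size w -> nth Blank w i = Zero \/ nth Blank w i = One) ->
  0 < size w -> size w <= ncells w k ->
  (forall i, exists j q b, 1 <= j <= ncells w k /\
       run q0 delta w (ncells w k) i j = DHead q b) ->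
  (forall i j b, run q0 delta w (ncells w k) i j = DHead qF b -> j = 1 /\ b = SA) ->
  (verifier_wins_reach qF delta (ncells w k) (init_conf q0 w (ncells w k))
       (GS0 Q, 0) (GSF Q)
   <-> accepts q0 qF delta w (ncells w k)).
Proof.
move=> _ _ _ _ accept_at_1.
have N_gt0 : 0 < ncells w k by rewrite expn_gt0.
split=> [wins | [i [j [b accept_i]]]].
- apply: NNPP => rejects; apply: rejecting_verifier_loses N_gt0 _ wins => m accept_m.
  by apply: rejects; exists m, 1, SA.
- have [j1 bSA] := accept_at_1 _ _ _ accept_i; subst j b.
  exact: (accepting_verifier_wins N_gt0 accept_i).
Qed.
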